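(* Let $x,y\in\mathbf S^3$ be distinct, and let $w\in\mathbb{C}^3$ be any representative of $\pi_x(y)$. Then \[\frac{\langle w,w\rangle}{\|w\|^2}=-\frac{|\langle x,y\rangle|^2}{\|x\wedge y\|^2},\] for any representatives $x,y\in\mathbb{C}^3$.
   Context: On $\mathbb{C}^3$: $u\cdot v=\sum u_i\bar v_i$, $\|u\|=\sqrt{u\cdot u}$, $\langle u,v\rangle=u_0\bar v_0-u_1\bar v_1-u_2\bar v_2$, $\|u\wedge v\|^2=\|u\|^2\|v\|^2-|u\cdot v|^2$. $\mathbf S^3=\{u\in\mathbb P^2_{\mathbb C}:\langle u,u\rangle=0\}$. For $w$, $w^\perp=\{u:\langle u,w\rangle=0\}$ (a projective line). For $x\in\mathbf S^3$ and $y\in\mathbf S^3\setminus\{x\}$, $\pi_x(y)$ is the unique intersection point of the projective lines $x^\perp$ and $y^\perp$. *)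

(* C^3 is modelled as 'rV[C]_3 over an arbitrary
   numClosedFieldType C (the complex numbers are an instance). *)
From HB Require Import structures.
From mathcomp Require Import all_boot all_order all_algebra.
Set Implicit Arguments. Unset Strict Implicit. Unset Printing Implicit Defensive.
Import Order.TTheory GRing.Theory Num.Theory.
Local Open Scope ring_scope.

Definition hdot (C : numClosedFieldType) (u v : 'rV[C]_3) : C :=
  \sum_(i < 3) u 0 i * (v 0 i)^*.

Definition vnorm (C : numClosedFieldType) (u : 'rV[C]_3) : C :=
  sqrtC (hdot u u).

Definition lform (C : numClosedFieldType) (u v : 'rV[C]_3) : C :=
  u 0 0 * (v 0 0)^* - u 0 1 * (v 0 1)^* - u 0 2%:R * (v 0 2%:R)^*.

Definition wedge_norm2 (C : numClosedFieldType) (u v : 'rV[C]_3) : C :=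
  vnorm u ^+ 2 * vnorm v ^+ 2 - `|hdot u v| ^+ 2.

Definition repS3 (C : numClosedFieldType) (u : 'rV[C]_3) : Prop :=
  u != 0 /\ lform u u = 0.

Definition proj_eq (C : numClosedFieldType) (u v : 'rV[C]_3) : Prop :=
  exists c : C, c != 0 /\ v = c *: u.

(* w is a representative of pi_x(y), the intersection point of the
   projective lines x^perp and y^perp *)
Definition rep_pi (C : numClosedFieldType) (x y w : 'rV[C]_3) : Prop :=
  w != 0 /\ lform w x = 0 /\ lform w y = 0.

From HB Require Import structures.
From mathcomp Require Import all_boot all_order all_algebra ring.
Set Implicit Arguments.
Unset Strict Implicit.
Unset Printing Implicit Defensive.
Import Order.TTheory GRing.Theory Num.Theory.
Local Open Scope ring_scope.

(* With [lconj x := (conj x_0, - conj x_1, - conj x_2)], [<w, x>] is the bilinear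
   product of [w] and [lconj x].  By the triple product expansion, a [w] with
   [<w, x> = <w, y> = 0] is therefore parallel to
   [lconj x \times lconj y = lconj (x \times y)], which is nonzero because [x]
   and [y] are not proportional.  The ratio [<w, w> / ||w||^2] only depends on
   the line of [w], and [lconj] preserves both forms, so it equals
   [<x \times y, x \times y> / ||x \times y||^2].  The Lagrange identities for
   the Hermitian and for the Lorentzian form (diag(1,-1,-1) is its own cofactor
   matrix) turn this into [(<x, x> <y, y> - |<x, y>|^2) / ||x ^ y||^2], and
   [<x, x> = <y, y> = 0]. *)

Lemma ord3P (i : 'I_3) : [\/ i = 0, i = 1 | i = 2%:R].
Proof.
case: i => [[|[|[|//]]] ?]; [apply: Or31 | apply: Or32 | apply: Or33];
  exact: val_inj.
Qed.

Section Cross.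
Variable R : comPzRingType.
Implicit Types u v w : 'rV[R]_3.

Definition row3 (a b c : R) : 'rV[R]_3 := \row_(i < 3) nth a [:: a; b; c] i.

Lemma row3P u v : u 0 0 = v 0 0 -> u 0 1 = v 0 1 -> u 0 2%:R = v 0 2%:R -> u = v.
Proof. by move=> e0 e1 e2; apply/rowP => i; case: (ord3P i) => ->. Qed.

Lemma sum3E (F : 'I_3 -> R) : \sum_(i < 3) F i = F 0 + F 1 + F 2%:R.
Proof.
rewrite !big_ord_recl big_ord0 addr0 addrA.
by congr (_ + F _ + F _); apply/val_inj.
Qed.

Definition dot u v := \sum_(i < 3) u 0 i * v 0 i.

Definition cross u v := row3
  (u 0 1 * v 0 2%:R - u 0 2%:R * v 0 1)
  (u 0 2%:R * v 0 0 - u 0 0 * v 0 2%:R)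
  (u 0 0 * v 0 1 - u 0 1 * v 0 0).

Lemma crossr0 u : cross u 0 = 0.
Proof. by apply: row3P; rewrite !mxE /= !mulr0 subrr. Qed.

Lemma cross_cross u v w : cross u (cross v w) = dot u w *: v - dot u v *: w.
Proof. by rewrite /dot !sum3E; apply: row3P; rewrite !mxE /=; ring. Qed.

End Cross.

Section Hermitian.
Variable C : numClosedFieldType.
Implicit Types u v w x y : 'rV[C]_3.

Lemma hdotE u v :
  hdot u v = u 0 0 * (v 0 0)^* + u 0 1 * (v 0 1)^* + u 0 2%:R * (v 0 2%:R)^*.
Proof. exact: sum3E. Qed.

Definition lconj u := row3 (u 0 0)^* (- (u 0 1)^*) (- (u 0 2%:R)^*).

Lemma lform_dot w x : lform w x = dot w (lconj x).
Proof. by rewrite /lform /dot sum3E !mxE /=; ring. Qed.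

Lemma cross_lconj x y : cross (lconj x) (lconj y) = lconj (cross x y).
Proof. by apply: row3P; rewrite !mxE /= !(rmorphB, rmorphM); ring. Qed.

Lemma hdot_lconj u : hdot (lconj u) (lconj u) = hdot u u.
Proof. by rewrite !hdotE !mxE /= !rmorphN /= !conjCK; ring. Qed.

Lemma lform_lconj u : lform (lconj u) (lconj u) = lform u u.
Proof. by rewrite /lform !mxE /= !rmorphN /= !conjCK; ring. Qed.

Lemma hdot_cross x y :
  hdot (cross x y) (cross x y) = hdot x x * hdot y y - hdot x y * (hdot x y)^*.
Proof. by rewrite !hdotE !mxE /= !(rmorphD, rmorphB, rmorphN, rmorphM) /= !conjCK; ring. Qed.

Lemma lform_cross x y :
  lform (cross x y) (cross x y) = lform x x * lform y y - lform x y * (lform x y)^*.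
Proof. by rewrite /lform !mxE /= !(rmorphD, rmorphB, rmorphN, rmorphM) /= !conjCK; ring. Qed.

Lemma hdot_eq0 u : (hdot u u == 0) = (u == 0).
Proof.
apply/eqP/eqP => [u0|->]; last by rewrite /hdot big1 // => i _; rewrite mxE mul0r.
apply/rowP => i; rewrite mxE; apply/eqP; rewrite -mul_conjC_eq0; apply/eqP.
by apply: (psumr_eq0P _ u0) => // j _; rewrite -normCK exprn_ge0.
Qed.

Lemma lconj_eq0 u : (lconj u == 0) = (u == 0).
Proof. by rewrite -!hdot_eq0 hdot_lconj. Qed.

Lemma dot_conj u v : dot (map_mx Num.conj u) v = hdot v u.
Proof. by apply: eq_bigr => i _; rewrite mxE mulrC. Qed.

Lemma cross_eq0_scale u v :
  u != 0 -> cross u v = 0 -> v = (hdot v u / hdot u u) *: u.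
Proof.
move=> u0 uv; have uu : hdot u u != 0 by rewrite hdot_eq0.
have := cross_cross (map_mx Num.conj u) u v.
rewrite uv crossr0 !dot_conj => /eqP; rewrite eq_sym subr_eq0 => /eqP vuE.
by rewrite mulrC -scalerA vuE scalerA mulVf // scale1r.
Qed.

Lemma cross_eq0_proj_eq u v : u != 0 -> v != 0 -> cross u v = 0 -> proj_eq u v.
Proof.
move=> u0 v0 /(cross_eq0_scale u0) vE; exists (hdot v u / hdot u u); split=> //.
by apply: contraNneq v0 => c0; rewrite vE c0 scale0r.
Qed.

Lemma hdotZ c u : hdot (c *: u) (c *: u) = c * c^* * hdot u u.
Proof. by rewrite !hdotE !mxE !rmorphM; ring. Qed.

Lemma lformZ c u : lform (c *: u) (c *: u) = c * c^* * lform u u.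
Proof. by rewrite /lform !mxE !rmorphM; ring. Qed.

Lemma lform_ratio_proj_eq u v :
  proj_eq u v -> lform v v / hdot v v = lform u u / hdot u u.
Proof.
move=> [c [c0 ->]]; rewrite hdotZ lformZ invfM mulrACA divff ?mul1r //.
by rewrite mul_conjC_eq0.
Qed.

End Hermitian.

Theorem lemma5p7 (C : numClosedFieldType) (x y w : 'rV[C]_3) :
  repS3 x -> repS3 y -> ~ proj_eq x y ->
  rep_pi x y w ->
  lform w w / vnorm w ^+ 2 = - (`|lform x y| ^+ 2 / wedge_norm2 x y).
Proof.
move=> [x0 xx] [y0 yy] nxy [w0 [wx wy]].
have xy0 : cross x y != 0 by apply/eqP => /(cross_eq0_proj_eq x0 y0).
have wn : proj_eq w (lconj (cross x y)).
  apply: cross_eq0_proj_eq; rewrite ?lconj_eq0 //.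
  by rewrite -cross_lconj cross_cross -!lform_dot wx wy !scale0r subr0.
rewrite /wedge_norm2 /vnorm !sqrtCK !normCK -hdot_cross -mulNr.
have -> : - (lform x y * (lform x y)^*) = lform (cross x y) (cross x y).
  by rewrite lform_cross xx yy mul0r sub0r.
by rewrite -(lform_lconj (cross x y)) -(hdot_lconj (cross x y)) (lform_ratio_proj_eq wn).
Qed.
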